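(* Let $n\ge2$, $\lambda\in(-1,1)$, let $g$ be $\mathscr{R}$-admissible and $G$ be $\mathscr{G}$-admissible. There exists a constant $c=c(n,\lambda,g,G)$ such that $$\mathscr{R}(B^\lambda(m))\le c\,m,\qquad \mathscr{G}(B^\lambda(m))\le c\,m$$ for every $0<m\le|B^\lambda|$.
   Context: $|\cdot|$ is Lebesgue measure. $B^\lambda:=\{x\in B_1(0): x_n>\lambda\}$ and, for $m>0$, $B^\lambda(m):=\frac{m^{1/n}}{|B^\lambda|^{1/n}}(B^\lambda-\lambda e_n)$ (a truncated ball of volume $m$ lying in $\{x_n>0\}$). $\mathscr{R}(E):=\int_E\int_Eg(y-x)\,dy\,dx$, $\mathscr{G}(E):=\int_EG(x_n)\,dx$. $g:\mathbb{R}^n\setminus\{0\}\to(0,\infty)$ is $\mathscr{R}$-admissible if $\mathscr{R}(B_1)<\infty$, $B_1$ the unit ball at $0$. $G:(0,\infty)\to(0,\infty)$ is $\mathscr{G}$-admissible if $\sup_{t\in(0,2)}G(t)<\infty$ and $G(\alpha t)\le\alpha^nG(t)$ for all $\alpha>1,t>0$. *)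

(* R^n is modelled as n.-tuple R, which
   carries the product (Borel) sigma-algebra from measurable_structure.v.
   n-dimensional Lebesgue integration of nonnegative functions is defined by
   iterated one-dimensional Lebesgue integrals (Tonelli). *)
From HB Require Import structures.
From mathcomp Require Import all_boot all_order all_algebra.
From mathcomp Require Import all_classical all_reals all_analysis.
Set Implicit Arguments. Unset Strict Implicit. Unset Printing Implicit Defensive.
Import Order.TTheory GRing.Theory Num.Theory.
Local Open Scope classical_set_scope.
Local Open Scope ring_scope.

Section Defs.
Variable R : realType.

Fixpoint iint (n : nat) : (n.-tuple R -> \bar R) -> \bar R :=
  match n return (n.-tuple R -> \bar R) -> \bar R with
  | 0 => fun f => f [tuple]
  | k.+1 => fun f =>
      (\int[@lebesgue_measure R]_x iint (fun t : k.-tuple R => f (cons_tuple x t)))%E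
  end.

Definition leb (n : nat) (E : set (n.-tuple R)) : \bar R :=
  iint (fun x => (\1_E x)%:E).

Definition tsub n (x y : n.-tuple R) : n.-tuple R :=
  [tuple tnth x i - tnth y i | i < n].
Definition tscale n (c : R) (x : n.-tuple R) : n.-tuple R :=
  [tuple c * tnth x i | i < n].
Definition tnorm2 n (x : n.-tuple R) : R := \sum_(i < n) tnth x i ^+ 2.
Definition xlast n (x : n.-tuple R) : R := nth 0 x n.-1.
Definition elast n : n.-tuple R :=
  [tuple (if (i : nat) == n.-1 then 1 else 0) | i < n].

Definition unit_ball (n : nat) : set (n.-tuple R) := [set x | tnorm2 x < 1].

Definition Blam (n : nat) (lam : R) : set (n.-tuple R) :=
  [set x | @unit_ball n x /\ lam < xlast x].

Definition Blam_m (n : nat) (lam m : R) : set (n.-tuple R) :=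
  let s := powR (m / fine (leb (@Blam n lam))) (n%:R^-1) in
  [set tscale s (tsub x (tscale lam (elast n))) | x in @Blam n lam].

Definition Rfun n (g : n.-tuple R -> R) (E : set (n.-tuple R)) : \bar R :=
  iint (fun x => iint (fun y => ((\1_E x) * (\1_E y) * g (tsub y x))%:E)).

Definition Gfun n (G : R -> R) (E : set (n.-tuple R)) : \bar R :=
  iint (fun x => ((\1_E x) * G (xlast x))%:E).

Definition R_admissible n (g : n.-tuple R -> R) : Prop :=
  (forall x, x != [tuple of nseq n 0] -> 0 < g x) /\
  measurable_fun setT g /\
  (Rfun g (@unit_ball n) < +oo)%E.

Definition G_admissible (n : nat) (G : R -> R) : Prop :=
  (forall t, 0 < t -> 0 < G t) /\
  measurable_fun (`]0, +oo[%classic : set R) G /\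
  (exists M : R, forall t, 0 < t < 2 -> G t <= M) /\
  (forall alpha t, 1 < alpha -> 0 < t -> G (alpha * t) <= alpha ^+ n * G t).

End Defs.
Arguments unit_ball {R} n.
Arguments Blam {R} n lam.
Arguments Blam_m {R} n lam m.
Arguments G_admissible {R} n G.

(* Since g > 0 off the origin, the integrands of R(E) for g and for its
   positive part g+ differ only on the diagonal y = x, a null set for the inner
   integral, so we may work with g+ >= 0.  With s = (m/|B^lam|)^(1/n) <= 1, the
   set B^lam(m) = s (B^lam - lam e_n) lies in the cube Q_2s of half-side 2s, its
   translate by lam e_n lies in B_1 by convexity, and its last coordinate lies
   in (0, 2).  For rho = 1/(2n) we have Q_2rho in B_1, and translating the inner
   integral gives (2 rho)^n \int_(Q_rho) g+ <= R(B_1) < oo.  If 4s <= rho, the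
   same translation gives R(B^lam(m)) <= (4s)^n \int_(Q_rho) g+; otherwise
   R(B^lam(m)) <= R(B_1) <= (4s/rho)^n R(B_1).  Likewise
   G(B^lam(m)) <= (4s)^n sup_(0,2) G, and (4s)^n = 4^n m / |B^lam|. *)

From HB Require Import structures.
From mathcomp Require Import all_boot all_order all_algebra.
From mathcomp Require Import all_classical all_reals all_analysis.
From mathcomp Require Import ring lra.
Import Order.TTheory GRing.Theory Num.Theory.
Import HBNNSimple.
Local Open Scope classical_set_scope.
Local Open Scope ring_scope.

(* The integrands of the iterated integrals are never shown to be measurable,
   so only properties of the integral that hold for arbitrary functions are used. *)
Section integral_any_function.
Context d (T : measurableType d) (R : realType) (mu : {measure set T -> \bar R}).
Local Open Scope ereal_scope.

Lemma ge0_integral_le_ub (f : T -> \bar R) (X : \bar R) :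
  (forall x, 0 <= f x) ->
  (forall h : {nnsfun T >-> R}, (forall x, (h x)%:E <= f x) -> sintegral mu h <= X) ->
  \int[mu]_x f x <= X.
Proof.
move=> f_ge0 f_le; rewrite ge0_integralTE//.
by apply: ge_ereal_sup => _ [h /= hf <-]; exact: f_le.
Qed.

Lemma le_integralT (f h : T -> \bar R) :
  (forall x, 0 <= h x) -> (forall x, f x <= h x) ->
  \int[mu]_x f x <= \int[mu]_x h x.
Proof.
move=> h_ge0 fh.
have pos_le : \int[mu]_x f^\+ x <= \int[mu]_x h x.
  rewrite !ge0_integralTE//; apply: ereal_sup_le => _ [k /= kf <-].
  by exists k => //= x; rewrite (le_trans (kf x))// funeposE ge_max fh h_ge0.
rewrite integralE; apply: le_trans pos_le.
by rewrite -[leRHS]sube0 leeB// integral_ge0// => x _; exact: funeneg_ge0.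
Qed.

End integral_any_function.

Section lebesgue_translation.
Context {R : realType}.
Local Notation mu := (@lebesgue_measure R).
Local Open Scope ereal_scope.

Let measurable_subr (a : R) :
  measurable_fun (T := measurableTypeR R) (U := measurableTypeR R) [set: R] (fun x => x - a)%R.
Proof. by apply: measurable_realfun.measurable_funD => //; exact: measurable_cst. Qed.

(* The pushforward is a measure only given the measurability of the map, so
   its instance cannot be inferred and is named explicitly. *)
Let translated_measure (a : R) : {measure set (measurableTypeR R) -> \bar R} :=
  measure_function_pushforward__canonical__measure_function_Measure mu
    (measurable_subr a).

Lemma lebesgue_measure_subr (a : R) (A : set R) : measurable A ->
  mu ((fun x => x - a)%R @^-1` A) = mu A.
Proof.
move=> mA; have /(_ _ A mA) /= -> // := lebesgue_measure_unique (mu := translated_measure a).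
move=> _ [[x_ball x2] _ <-]; rewrite /= /pushforward.
have -> : (fun x => x - a)%R @^-1` `]x_ball, x2]%classic = `](x_ball + a)%R, (x2 + a)%R]%classic.
  by apply/seteqP; split => y /=; rewrite !in_itv /= => /andP[? ?]; apply/andP; split; lra.
rewrite !lebesgue_measure_itv /= !lte_fin ltrD2r.
by case: ifP => // _; rewrite -!EFinD; congr (_%:E); lra.
Qed.

Let integral_nnsfun_subr (h : {nnsfun measurableTypeR R >-> R}) (a : R) :
  \int[mu]_x (h (x - a)%R)%:E = \int[mu]_x (h x)%:E.
Proof.
rewrite -[RHS](@eq_measure_integral _ _ _ _ _ (translated_measure a)).
  rewrite ge0_integral_pushforward ?preimage_setT//; first exact/measurable_realfun.measurable_EFinP.
  by move=> y _; rewrite lee_fin.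
by move=> A mA _; rewrite /= /pushforward lebesgue_measure_subr.
Qed.

Let ge0_integral_subr_le (f : R -> \bar R) (a : R) : (forall x, 0 <= f x) ->
  \int[mu]_x f (x - a)%R <= \int[mu]_x f x.
Proof.
move=> f_ge0; apply: ge0_integral_le_ub => [x|h hf]; first exact: f_ge0.
rewrite -integralT_nnsfun -(integral_nnsfun_subr h (- a)).
apply: le_integralT => x /=; first exact: f_ge0.
by have := hf (x - - a)%R; rewrite opprK addrK.
Qed.

Lemma ge0_integral_subr (f : R -> \bar R) (a : R) : (forall x, 0 <= f x) ->
  \int[mu]_x f (x - a)%R = \int[mu]_x f x.
Proof.
move=> f_ge0; apply/le_anti/andP; split; first exact: ge0_integral_subr_le.
have := @ge0_integral_subr_le _ (- a)%R (fun x => f_ge0 (x - a)%R).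
by under eq_integral do rewrite opprK addrK.
Qed.

Lemma ge0_le_integralT_but1 (f h : R -> \bar R) (p : R) :
  (forall x, 0 <= f x) -> (forall x, x != p -> f x <= h x) ->
  \int[mu]_x f x <= \int[mu]_x h x.
Proof.
move=> f_ge0 fh.
have hneg0 : \int[mu]_x h^\- x = 0.
  rewrite -(integral_set1 (h^\-) p) [RHS]integral_mkcond.
  apply: eq_integral => x _; rewrite /patch; case: ifPn => // /negP.
  rewrite inE /= => /eqP xp; apply/le_anti; rewrite funeneg_ge0 andbT.
  by rewrite funenegE ge_max lexx andbT leeNl oppe0 (le_trans (f_ge0 x) (fh x xp)).
rewrite [leRHS]integralE hneg0 sube0.
apply: ge0_integral_le_ub => // k kf; rewrite -integralT_nnsfun.
rewrite -(@integral_setD1 _ (EFin \o k) p setT); last 2 first.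
- exact: measurableD.
- by apply/measurable_realfun.measurable_EFinP; apply: measurable_funS (measurable_funPT k).
rewrite [leLHS]integral_mkcond; apply: le_integralT => x; first exact: funepos_ge0.
rewrite /patch; case: ifPn => [|_]; last exact: funepos_ge0.
rewrite inE /= => -[_ /eqP xp]; apply: le_trans (kf x) _.
by rewrite funeposE le_max fh.
Qed.

End lebesgue_translation.

Section indicator.
Context {R : realType} {T : Type}.

Lemma indic_ge0 (A : set T) x : 0 <= \1_A x :> R.
Proof. by rewrite indicE. Qed.

Lemma le_indic (A B : set T) x : A `<=` B -> \1_A x <= \1_B x :> R.
Proof.
rewrite !indicE => AB; case: (boolP (x \in A)) => [/set_mem/AB/mem_set -> //|_].
by case: (x \in B).
Qed.

End indicator.

Section tuple_lemmas.
Context {R : realType}.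

Lemma tnth_tsub {k} (x y : k.-tuple R) i : tnth (tsub x y) i = tnth x i - tnth y i.
Proof. exact: tnth_mktuple. Qed.

Lemma tnth_tscale {k} (c : R) (x : k.-tuple R) i : tnth (tscale c x) i = c * tnth x i.
Proof. exact: tnth_mktuple. Qed.

Lemma tnth_elast {k} i : tnth (@elast R k) i = if i == k.-1 :> nat then 1 else 0.
Proof. exact: tnth_mktuple. Qed.

Lemma xlastE {k} (x : k.+1.-tuple R) : xlast x = tnth x ord_max.
Proof. by rewrite /xlast (tnth_nth 0). Qed.

Lemma tsub_cons {k} (x a : R) (t v : k.-tuple R) :
  tsub (cons_tuple x t) (cons_tuple a v) = cons_tuple (x - a) (tsub t v).
Proof.
apply: eq_from_tnth => i; rewrite tnth_tsub.
by case: (unliftP ord0 i) => [j ->|->]; rewrite ?tnthS ?tnth0 ?tnth_tsub.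
Qed.

Lemma tsub_tsub {k} (x y w : k.-tuple R) : tsub (tsub y w) (tsub x w) = tsub y x.
Proof. by apply: eq_from_tnth => i; rewrite !tnth_tsub; ring. Qed.

Lemma tsub_eq0 {k} (x y : k.-tuple R) : tsub y x = [tuple of nseq k 0] -> y = x.
Proof.
move=> yx; apply: eq_from_tnth => i; apply/eqP; rewrite -subr_eq0.
by rewrite -tnth_tsub yx tnth_nseq.
Qed.

Lemma sqr_le_tnorm2 {k} (x : k.-tuple R) i : tnth x i ^+ 2 <= tnorm2 x.
Proof. by rewrite /tnorm2 (bigD1 i) //= lerDl sumr_ge0 // => j _; exact: sqr_ge0. Qed.

Lemma tnorm2_tscale {k} (c : R) (x : k.-tuple R) : tnorm2 (tscale c x) = c ^+ 2 * tnorm2 x.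
Proof. by rewrite /tnorm2 mulr_sumr; apply: eq_bigr => i _; rewrite tnth_tscale exprMn. Qed.

Lemma tnorm2_elast k : tnorm2 (@elast R k.+1) = 1.
Proof.
rewrite /tnorm2 (bigD1 ord_max) //= tnth_elast eqxx expr1n big1 ?addr0 // => i iN.
by rewrite tnth_elast ifF ?expr0n //; apply: contraNF iN => /eqP iN; apply/eqP/val_inj.
Qed.

Lemma tnorm2_convex {k} (x y : k.-tuple R) (t : R) : 0 <= t <= 1 ->
  tnorm2 [tuple t * tnth x i + (1 - t) * tnth y i | i < k] <=
  t * tnorm2 x + (1 - t) * tnorm2 y.
Proof.
move=> /andP[t_ge0 t_le1]; rewrite /tnorm2 !mulr_sumr -big_split /=.
apply: ler_sum => i _; rewrite tnth_mktuple.
have t1_ge0 : 0 <= 1 - t by rewrite subr_ge0.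
have := mulr_ge0 (mulr_ge0 t_ge0 t1_ge0) (sqr_ge0 (tnth x i - tnth y i)).
nra.
Qed.

End tuple_lemmas.

Section cube.
Context {R : realType}.

Definition cube {k} (r : R) : set (k.-tuple R) := [set x | forall i, `|tnth x i| < r].

Lemma subset_cube {k} {r1 r2 : R} : r1 <= r2 -> @cube k r1 `<=` cube r2.
Proof. by move=> r_le x xr i; exact: lt_le_trans (xr i) r_le. Qed.

Lemma cube_tsub {k} {r : R} {x y : k.-tuple R} :
  cube r x -> cube r y -> cube (r + r) (tsub y x).
Proof.
move=> xr yr i; rewrite tnth_tsub.
by apply: le_lt_trans (ler_normB _ _) _; rewrite ltrD.
Qed.

Lemma cube_tsubr {k} {r1 r2 : R} {x y : k.-tuple R} :
  cube r1 x -> cube r2 (tsub y x) -> cube (r1 + r2) y.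
Proof.
move=> xr yxr i; have := yxr i; rewrite tnth_tsub => yxi.
rewrite -(subrK (tnth x i) (tnth y i)) addrC.
by apply: le_lt_trans (ler_normD _ _) _; rewrite ltrD.
Qed.

Lemma cube_cons {k} (r x : R) (t : k.-tuple R) :
  cube r (cons_tuple x t) <-> `|x| < r /\ cube r t.
Proof.
split => [xt|[xr tr] i].
  by split => [|j]; [exact: (xt ord0) | have := xt (lift ord0 j); rewrite tnthS].
by case: (unliftP ord0 i) => [j ->|->]; rewrite ?tnthS ?tnth0.
Qed.

Lemma indic_cube_cons {k} (r x : R) (t : k.-tuple R) :
  \1_(cube r) (cons_tuple x t) = \1_`](- r), r[%classic x * \1_(cube r) t :> R.
Proof.
have xr : (x \in `](- r), r[%classic) = (`|x| < r).
  apply/idP/idP => [/set_mem /=|xr]; first by rewrite in_itv /= ltr_norml.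
  by apply/mem_set; rewrite /= in_itv /= -ltr_norml.
rewrite !indicE xr.
have -> : (cons_tuple x t \in cube r) = (`|x| < r) && (t \in cube r).
  apply/idP/andP => [/set_mem/cube_cons[-> /mem_set//]|[x_lt /set_mem t_cube]].
  exact/mem_set/cube_cons.
by rewrite -natrM mulnb.
Qed.

Lemma unit_ball_sub_cube {k} : unit_ball k `<=` cube (1 : R).
Proof.
move=> x; rewrite /unit_ball /= => x_ball i; have xi := sqr_le_tnorm2 x i.
by rewrite ltr_norml; apply/andP; split; nra.
Qed.

Lemma cube_sub_unit_ball k (r : R) : k%:R * r ^+ 2 < 1 -> cube r `<=` unit_ball k.
Proof.
move=> k_r2 x xr; apply: le_lt_trans k_r2.
rewrite /tnorm2 mulr_natl -[X in _ *+ X]card_ord -sumr_const.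
apply: ler_sum => i _; have := xr i.
by rewrite ltr_norml => /andP[? ?]; nra.
Qed.

End cube.

Section iterated_integral.
Context {R : realType}.
Local Notation mu := (@lebesgue_measure R).
Local Open Scope ereal_scope.

Lemma iint_ge0 {k} (f : k.-tuple R -> \bar R) : (forall x, 0 <= f x) -> 0 <= iint f.
Proof.
elim: k f => [|k IH] f f_ge0 /=; first exact: f_ge0.
by apply: integral_ge0 => x _; exact: IH.
Qed.

Lemma le_iint {k} (f h : k.-tuple R -> \bar R) :
  (forall x, 0 <= h x) -> (forall x, f x <= h x) -> iint f <= iint h.
Proof.
elim: k f h => [|k IH] f h h_ge0 fh /=; first exact: fh.
by apply: le_integralT => x; [exact: iint_ge0 | exact: IH].
Qed.

Lemma iint0 k : iint (fun _ : k.-tuple R => 0) = 0.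
Proof. by elim: k => [|k IH] //=; apply: integral0_eq => x _; rewrite IH. Qed.

Lemma ge0_iint_tsub {k} (f : k.-tuple R -> \bar R) (v : k.-tuple R) :
  (forall x, 0 <= f x) -> iint (fun y => f (tsub y v)) = iint f.
Proof.
elim: k f v => [|k IH] f v f_ge0 /=.
  by congr (f _); apply: eq_from_tnth => -[].
have -> : v = cons_tuple (thead v) (behead_tuple v) by exact: tuple_eta.
rewrite -[RHS](ge0_integral_subr _ (thead v)); last first.
  by move=> x; exact: iint_ge0.
apply: eq_integral => x _.
rewrite -(IH (fun t => f (cons_tuple (x - thead v)%R t)) (behead_tuple v)) //.
by congr iint; apply: funext => t; rewrite tsub_cons.
Qed.

Lemma le_iint_but1 {k} (f h : k.+1.-tuple R -> \bar R) (p : k.+1.-tuple R) :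
  (forall x, 0 <= f x) -> (forall x, x != p -> f x <= h x) -> iint f <= iint h.
Proof.
move=> f_ge0 fh /=; apply: (ge0_le_integralT_but1 _ _ (thead p)) => [x|x xp].
  exact: iint_ge0.
have tp t : cons_tuple x t != p by apply: contraNneq xp => <-; rewrite theadE.
by apply: le_iint => t; [exact: le_trans (f_ge0 _) (fh _ (tp t)) | exact: fh].
Qed.

Lemma iint_indic_cube k (r : R) (c : \bar R) : (0 < r)%R -> 0 <= c ->
  iint (fun x : k.-tuple R => (\1_(cube r) x)%:E * c) = ((2 * r) ^+ k)%:E * c.
Proof.
move=> r_gt0; elim: k c => [|k IH] c c_ge0 /=; first by rewrite indicE mem_set ?expr0 // => -[].
transitivity (\int[mu]_x ((((2 * r) ^+ k)%:E * c) * (\1_(`](- r)%R, r[%classic) x)%:E)).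
  apply: eq_integral => x _; rewrite -muleA -IH ?mule_ge0 ?lee_fin//.
  by congr iint; apply: funext => t; rewrite indic_cube_cons EFinM -muleA muleC -muleA.
have itv_r : mu `](- r)%R, r[%classic = (2 * r)%:E.
  rewrite lebesgue_measure_itv/= lte_fin ifT; last lra.
  by rewrite opprK -EFinD; congr (_%:E); lra.
rewrite ge0_integralZl//; last 2 first.
- exact/measurable_realfun.measurable_EFinP/measurable_realfun.measurable_indic.
- by rewrite mule_ge0// lee_fin exprn_ge0// mulr_ge0// ltW.
rewrite integral_indic// setIT (_ : _ `](- r)%R, r[%classic = (2 * r)%:E); last exact: itv_r.
by rewrite exprS muleAC -EFinM mulrC.
Qed.

Lemma leb_le_cube {k} (S : set (k.-tuple R)) (r : R) : (0 < r)%R -> S `<=` cube r ->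
  leb S <= ((2 * r) ^+ k)%:E.
Proof.
move=> r_gt0 Sr; rewrite -[leRHS]mule1 -iint_indic_cube//.
by apply: le_iint => x; rewrite mule1 lee_fin; [exact: indic_ge0 | exact: le_indic].
Qed.

End iterated_integral.

Section Rfun_nonneg_kernel.
Context {R : realType} {k : nat} (h : k.-tuple R -> R).
Hypothesis h_ge0 : forall z, 0 <= h z.
Local Open Scope ereal_scope.

Definition cube_integral (r : R) : \bar R := iint (fun z => (\1_(cube r) z * h z)%:E).

Lemma cube_integral_ge0 r : 0 <= cube_integral r.
Proof. by apply: iint_ge0 => z; rewrite lee_fin mulr_ge0 ?indic_ge0. Qed.

Let Rfun_integrand_ge0 (S : set (k.-tuple R)) x y :
  0 <= (\1_S x * \1_S y * h (tsub y x))%:E.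
Proof. by rewrite lee_fin !mulr_ge0 ?indic_ge0. Qed.

Lemma Rfun_ge0 S : 0 <= Rfun h S.
Proof. by apply: iint_ge0 => x; exact: iint_ge0. Qed.

Lemma le_Rfun S T : S `<=` T -> Rfun h S <= Rfun h T.
Proof.
move=> ST; apply: le_iint => x; first exact: iint_ge0.
apply: le_iint => y //; rewrite lee_fin ler_wpM2r//.
by apply: ler_pM; rewrite ?indic_ge0// le_indic.
Qed.

Lemma Rfun_tsub S w : Rfun h [set z | S (tsub z w)] = Rfun h S.
Proof.
rewrite /Rfun -[RHS](ge0_iint_tsub _ w); last by move=> x; exact: iint_ge0.
congr iint; apply: funext => x.
by rewrite -[RHS](ge0_iint_tsub _ w)//; congr iint; apply: funext => y; rewrite tsub_tsub.
Qed.

Lemma Rfun_le_cube S r rho : (0 < r)%R -> (r + r <= rho)%R -> S `<=` cube r ->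
  Rfun h S <= ((2 * r) ^+ k)%:E * cube_integral rho.
Proof.
move=> r_gt0 r_rho Sr; rewrite -iint_indic_cube ?cube_integral_ge0//.
apply: le_iint => x; first by rewrite mule_ge0 ?cube_integral_ge0// lee_fin indic_ge0.
case: (pselect (S x)) => Sx; last first.
  rewrite (_ : (fun y => _) = fun=> 0) ?iint0 ?mule_ge0 ?cube_integral_ge0 ?lee_fin ?indic_ge0//.
  by apply: funext => y; rewrite [\1_S x]indicE memNset ?mul0r.
rewrite [\1_(cube r) x]indicE mem_set ?mul1e; last exact: Sr.
rewrite /cube_integral -[leRHS](ge0_iint_tsub _ x) => [|z]; last by rewrite lee_fin mulr_ge0 ?indic_ge0.
apply: le_iint => y; first by rewrite lee_fin mulr_ge0 ?indic_ge0.
rewrite lee_fin ler_wpM2r// [\1_S x]indicE mem_set// mul1r.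
case: (pselect (S y)) => Sy; last by rewrite [\1_S y]indicE memNset ?indic_ge0.
rewrite [\1_S y]indicE indicE !mem_set//.
exact: subset_cube r_rho _ (cube_tsub (Sr _ Sx) (Sr _ Sy)).
Qed.

Lemma cube_integral_le_Rfun S r : (0 < r)%R -> cube (r + r) `<=` S ->
  ((2 * r) ^+ k)%:E * cube_integral r <= Rfun h S.
Proof.
move=> r_gt0 rS; rewrite -iint_indic_cube ?cube_integral_ge0//.
apply: le_iint => x; first exact: iint_ge0.
rewrite indicE; case: (boolP (x \in cube r)) => [/set_mem xr|_]; last first.
  by rewrite mul0e; exact: iint_ge0.
rewrite mul1e /cube_integral -(ge0_iint_tsub _ x) => [|z]; last first.
  by rewrite lee_fin mulr_ge0 ?indic_ge0.
apply: le_iint => y //; rewrite lee_fin ler_wpM2r// indicE.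
case: (boolP (tsub y x \in cube r)) => [/set_mem yxr|_]; last by rewrite !mulr_ge0 ?indic_ge0.
have r_2r : (r <= r + r)%R by rewrite lerDl ltW.
have Sx : S x := rS _ (subset_cube r_2r _ xr).
by rewrite !indicE !mem_set ?mulr1//; exact/rS/(cube_tsubr xr yxr).
Qed.

Lemma cube_integral_fin_num S r : (0 < r)%R -> cube (r + r) `<=` S ->
  Rfun h S < +oo -> cube_integral r \is a fin_num.
Proof.
move=> r_gt0 rS S_fin; rewrite ge0_fin_numE ?cube_integral_ge0// ltey.
apply/eqP => K_oo; have := cube_integral_le_Rfun _ _ r_gt0 rS.
rewrite K_oo muleC gt0_mulye ?lte_fin ?exprn_gt0 ?mulr_gt0// leye_eq => /eqP S_oo.
by rewrite S_oo ltxx in S_fin.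
Qed.

End Rfun_nonneg_kernel.

Section Rfun_positive_part.
Context {R : realType}.

Lemma Rfun_funrpos k (g : k.+1.-tuple R -> R) S :
  (forall z, z != [tuple of nseq k.+1 0] -> 0 < g z) -> Rfun g S = Rfun g^\+ S.
Proof.
move=> g_pos.
have integrand_ge0 x y : (0 <= (\1_S x * \1_S y * g^\+ (tsub y x))%:E)%E.
  by rewrite lee_fin !mulr_ge0 ?indic_ge0 ?funrpos_ge0.
have inner_le x :
    (iint (fun y => (\1_S x * \1_S y * g^\+ (tsub y x))%:E) <=
     iint (fun y => (\1_S x * \1_S y * g (tsub y x))%:E))%E.
  apply: (le_iint_but1 _ _ x) => // y yx.
  rewrite lee_fin /funrpos max_l// ltW// g_pos//.
  by apply: contraNneq yx => /tsub_eq0 ->.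
apply/le_anti/andP; split.
  apply: le_iint => x; first exact: iint_ge0.
  apply: le_iint => y //; rewrite lee_fin ler_wpM2l ?mulr_ge0 ?indic_ge0//.
  by rewrite /funrpos le_max lexx.
apply: le_iint => x; last exact: inner_le.
by apply: (le_trans _ (inner_le x)); exact: iint_ge0.
Qed.

End Rfun_positive_part.

Definition Blam_scaled {R : realType} k (lam s : R) : set (k.+1.-tuple R) :=
  [set tscale s (tsub x (tscale lam (elast R k.+1))) | x in Blam k.+1 lam].

Section Blam_scaled.
Context {R : realType} {k : nat} {lam s : R}.
Local Notation F := (Blam_scaled k lam s).

Lemma Blam_scaled_sub_cube : -1 < lam < 1 -> 0 < s -> F `<=` cube (s + s).
Proof.
move=> /andP[lam_gt lam_lt] s_gt0 _ [x [xB _] <-] i; have := unit_ball_sub_cube _ xB i.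
rewrite tnth_tscale tnth_tsub tnth_tscale tnth_elast !ltr_norml => /andP[xi_gt xi_lt].
by case: ifP => _; rewrite ?mulr1 ?mulr0 ?subr0; apply/andP; split; nra.
Qed.

Lemma Blam_scaled_sub_ball : -1 < lam < 1 -> 0 < s <= 1 ->
  F `<=` [set z | unit_ball k.+1 (tsub z (tscale (- lam) (elast R k.+1)))].
Proof.
move=> /andP[lam_gt lam_lt] s_bd _ [x [xB _] <-]; rewrite /unit_ball /=.
have -> : tsub (tscale s (tsub x (tscale lam (elast R k.+1)))) (tscale (- lam) (elast R k.+1)) =
    [tuple s * tnth x i + (1 - s) * tnth (tscale lam (elast R k.+1)) i | i < k.+1].
  by apply: eq_from_tnth => i; rewrite !tnth_mktuple; ring.
have /andP[s_gt0 s_le1] := s_bd.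
have s01 : 0 <= s <= 1 by rewrite ltW.
apply: le_lt_trans (tnorm2_convex _ _ _ s01) _.
rewrite tnorm2_tscale tnorm2_elast mulr1.
have lam2 : lam ^+ 2 < 1 by nra.
have : tnorm2 x < 1 := xB.
nra.
Qed.

Lemma Blam_scaled_xlast z : -1 < lam -> 0 < s <= 1 -> F z -> 0 < xlast z < 2.
Proof.
move=> lam_gt /andP[s_gt0 s_le1] [x [xB lam_x] <-]; rewrite xlastE in lam_x; rewrite xlastE.
have := unit_ball_sub_cube _ xB ord_max.
rewrite tnth_tscale tnth_tsub tnth_tscale tnth_elast /= eqxx mulr1 ltr_norml.
by move=> /andP[xn_gt xn_lt]; apply/andP; split; nra.
Qed.

Local Open Scope ereal_scope.

Lemma Rfun_Blam_scaled_le (h : k.+1.-tuple R -> R) (rho : R) :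
  (-1 < lam < 1)%R -> (0 < s <= 1)%R -> (forall z, 0 <= h z)%R -> (0 < rho)%R ->
  Rfun h F <= ((4 * s) ^+ k.+1)%:E *
    (cube_integral h rho + (rho ^- k.+1)%:E * Rfun h (unit_ball k.+1)).
Proof.
move=> lam_bd s_bd h_ge0 rho_gt0; have /andP[s_gt0 _] := s_bd.
have K_ge0 := cube_integral_ge0 h h_ge0 rho.
have A_ge0 : 0 <= (rho ^- k.+1)%:E * Rfun h (unit_ball k.+1).
  by rewrite mule_ge0 ?Rfun_ge0// lee_fin invr_ge0 exprn_ge0// ltW.
have c_ge0 : 0 <= ((4 * s) ^+ k.+1)%:E by rewrite lee_fin exprn_ge0// mulr_ge0// ltW.
have [small|large] := leP (4 * s)%R rho.
  apply: le_trans (lee_wpmul2l c_ge0 (leeDl _ A_ge0)).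
  rewrite (_ : 4 * s = 2 * (s + s))%R; last by ring.
  apply: Rfun_le_cube => //; [exact: addr_gt0 | lra | exact: Blam_scaled_sub_cube].
apply: le_trans (lee_wpmul2l c_ge0 (leeDr _ K_ge0)).
have c_ge1 : 1 <= ((4 * s) ^+ k.+1 * rho ^- k.+1)%:E.
  by rewrite lee_fin -exprVn -exprMn exprn_ege1// ler_pdivlMr// mul1r ltW.
rewrite muleA -EFinM; apply: (le_trans _ (lee_pemull (Rfun_ge0 h h_ge0 _) c_ge1)).
rewrite -[leRHS](Rfun_tsub h h_ge0 _ (tscale (- lam) (elast R k.+1))).
by apply: le_Rfun => //; exact: Blam_scaled_sub_ball.
Qed.

Lemma Gfun_Blam_scaled_le (G : R -> R) (M : R) :
  (-1 < lam < 1)%R -> (0 < s <= 1)%R -> (0 <= M)%R ->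
  (forall t, 0 < t < 2 -> G t <= M)%R ->
  Gfun G F <= ((4 * s) ^+ k.+1 * M)%:E.
Proof.
move=> lam_bd s_bd M_ge0 G_le; have /andP[s_gt0 _] := s_bd.
rewrite EFinM (_ : 4 * s = 2 * (s + s))%R; last by ring.
rewrite -iint_indic_cube ?lee_fin ?addr_gt0//.
apply: le_iint => z; first by rewrite mule_ge0 ?lee_fin ?indic_ge0.
rewrite -EFinM lee_fin; case: (pselect (F z)) => Fz; last first.
  by rewrite indicE memNset ?mul0r ?mulr_ge0 ?indic_ge0.
have Fz_cube : cube (s + s) z := Blam_scaled_sub_cube lam_bd s_gt0 _ Fz.
rewrite !indicE !mem_set// !mul1r; apply: G_le.
by case/andP: lam_bd => lam_gt _; exact: Blam_scaled_xlast lam_gt s_bd Fz.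
Qed.

End Blam_scaled.

Section Blam_m.
Context {R : realType}.

Lemma leb_Blam_fin_num k (lam : R) : leb (Blam k lam) \is a fin_num.
Proof.
rewrite ge0_fin_numE; last by apply: iint_ge0 => x; rewrite lee_fin indic_ge0.
apply: le_lt_trans (leb_le_cube _ _ ltr01 _) (ltry _).
by move=> x [xB _]; exact: unit_ball_sub_cube.
Qed.

Lemma powR_invn_exprn (a : R) n : 0 <= a -> (0 < n)%N -> (a `^ n%:R^-1) ^+ n = a.
Proof.
move=> a_ge0 n_gt0; rewrite -powR_mulrn ?powR_ge0// -powRrM mulVf ?powRr1//.
by rewrite pnatr_eq0 -lt0n.
Qed.

Lemma Blam_m_scaled {k} {lam m : R} : 0 < m -> (m%:E <= leb (Blam k.+1 lam))%E ->
  exists2 s, 0 < s <= 1 /\ s ^+ k.+1 = m / fine (leb (Blam k.+1 lam)) &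
    Blam_m k.+1 lam m = Blam_scaled k lam s.
Proof.
move=> m_gt0 m_le; set l := fine _.
have m_le_l : m <= l by rewrite -lee_fin /l fineK ?leb_Blam_fin_num.
have l_gt0 : 0 < l by exact: lt_le_trans m_le_l.
have s_exp : (m / l) `^ k.+1%:R^-1 ^+ k.+1 = m / l.
  by rewrite powR_invn_exprn// divr_ge0// ltW.
exists ((m / l) `^ k.+1%:R^-1) => //; split => //.
rewrite powR_gt0 ?divr_gt0//= -(expr_le1 (_ : 0 < k.+1)%N) ?powR_ge0//.
by rewrite s_exp ler_pdivrMr// mul1r.
Qed.

End Blam_m.

Lemma Rfun_Blam_scaled_bound {R : realType} {k} {lam : R} {g : k.+1.-tuple R -> R} :
  (0 < k)%N -> -1 < lam < 1 ->
  (forall z, z != [tuple of nseq k.+1 0] -> 0 < g z) -> (Rfun g (unit_ball k.+1) < +oo)%E ->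
  exists2 C : R, 0 <= C & forall s, 0 < s <= 1 ->
    (Rfun g (Blam_scaled k lam s) <= ((4 * s) ^+ k.+1 * C)%:E)%E.
Proof.
move=> k_gt0 lam_bd g_pos g_fin.
have gp_ge0 : forall z, 0 <= g^\+ z := funrpos_ge0 g.
pose rho : R := k.+1%:R^-1 / 2.
have rho_gt0 : 0 < rho by rewrite divr_gt0 ?invr_gt0 ?ltr0n.
have cube_ball : cube (rho + rho) `<=` unit_ball k.+1.
  apply: cube_sub_unit_ball; rewrite (_ : rho + rho = k.+1%:R^-1); last by rewrite /rho; field.
  by rewrite expr2 mulrA mulfV ?pnatr_eq0// mul1r invf_lt1 ?ltr0n// ltr1n.
pose K := cube_integral g^\+ rho.
pose A := Rfun g^\+ (unit_ball k.+1).
have K_ge0 : (0 <= K)%E := cube_integral_ge0 _ gp_ge0 rho.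
have A_ge0 : (0 <= A)%E := Rfun_ge0 _ gp_ge0 _.
have A_fin : A \is a fin_num by rewrite ge0_fin_numE// /A -Rfun_funrpos.
have K_fin : K \is a fin_num.
  by apply: (cube_integral_fin_num _ gp_ge0 _ _ rho_gt0 cube_ball); rewrite -Rfun_funrpos.
exists (fine K + rho ^- k.+1 * fine A) => [|s s_bd].
  by rewrite addr_ge0 ?mulr_ge0 ?fine_ge0// invr_ge0 exprn_ge0// ltW.
rewrite Rfun_funrpos// EFinM EFinD EFinM !fineK//.
exact: Rfun_Blam_scaled_le.
Qed.

Theorem lemma3p2 (R : realType) (n : nat) (lam : R)
    (g : n.-tuple R -> R) (G : R -> R) :
  (2 <= n)%N -> -1 < lam < 1 ->
  R_admissible g -> G_admissible n G ->
  exists c : R, forall m : R, 0 < m -> (m%:E <= leb (Blam n lam))%E ->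
    (Rfun g (Blam_m n lam m) <= (c * m)%:E)%E /\
    (Gfun G (Blam_m n lam m) <= (c * m)%:E)%E.
Proof.
case: n g => [//|n] g n_ge2 lam_bd [g_pos [_ g_fin]] [_ [_ [[M G_le] _]]].
have [CR CR_ge0 Rfun_le] := Rfun_Blam_scaled_bound n_ge2 lam_bd g_pos g_fin.
pose M' := Num.max M 0.
have M'_ge0 : 0 <= M' by rewrite le_max lexx orbT.
have G_le' t : 0 < t < 2 -> G t <= M' by move=> t_bd; rewrite le_max G_le.
exists (4 ^+ n.+1 / fine (leb (Blam n.+1 lam)) * (CR + M')) => m m_gt0 m_le.
have [s [s_bd s_exp] ->] := Blam_m_scaled m_gt0 m_le.
have -> : 4 ^+ n.+1 / fine (leb (Blam n.+1 lam)) * (CR + M') * m = (4 * s) ^+ n.+1 * (CR + M').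
  by rewrite exprMn s_exp; ring.
have pow_ge0 : 0 <= (4 * s) ^+ n.+1 by case/andP: s_bd => s_gt0 _; rewrite exprn_ge0// mulr_ge0// ltW.
split.
  by apply: le_trans (Rfun_le _ s_bd) _; rewrite lee_fin ler_wpM2l// lerDl.
apply: le_trans (Gfun_Blam_scaled_le _ _ lam_bd s_bd M'_ge0 G_le') _.
by rewrite lee_fin ler_wpM2l// lerDr.
Qed.
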